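(* Let $G=(V,E)$ be a finite connected graph and $P$ the transition matrix of an irreducible recurrent Markov chain on $G$. If $\eta$ is a golf process on $G$ with $|B^0|\le|H^0|$, then $\eta$ is valid. The same holds if $G$ is infinite (with countable vertex set), provided $|B^0|\le|H^0|$ and $|B^0|$ is finite.
   Context: Golf process on $G$: $P=(P_{u,v})$ with $P_{u,v}>0$ only if $\{u,v\}\in E$. The initial configuration (random or deterministic) consists of disjoint sets $B^0$ (vertices containing a ball) and $H^0$ (free holes); other vertices are neutral. Each vertex $v$ has an activation clock $C(v)\in(0,1)$, the clocks being a.s. pairwise distinct (e.g. i.i.d. uniform). At time $C(v)$, if $v$ contains a ball, the ball performs a $P$-random walk from $v$ (independent of everything else), stopped at the first time it is at a hole that is free at that time; it fills that hole and both $v$ and the hole become neutral. If the walk never hits a free hole, the whole process becomes frozen (all vertices set to a cemetery state $\ast$ until time $1$). Configurations lie in $\mathcal{S}=\{\text{hole},0,\text{ball},\ast\}^V$ with the product topology. The process is valid if it is almost surely well-defined and not frozen at time $1$, is measurable, and almost surely belongs to $D_{\mathcal{S}}[0,1]$, the càdlàg functions $[0,1]\to\mathcal{S}$ with the Skorokhod topology. *)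

From HB Require Import structures.
From mathcomp Require Import all_boot all_order all_algebra.
From mathcomp Require Import all_classical all_reals all_analysis.
From mathcomp Require Import finmap.
From Stdlib Require Import Relations.

Set Implicit Arguments.
Unset Strict Implicit.
Unset Printing Implicit Defensive.
Import Order.TTheory GRing.Theory Num.Theory.
Local Open Scope classical_set_scope.
Local Open Scope ring_scope.

(** States of a vertex: free hole, neutral (0), ball, cemetery (frozen). *)
Inductive site := SHole | SZero | SBall | SStar.

Section Graph.
Variables (R : realType) (V : countType).

Definition graph_rel (E : rel V) := forall u v, E u v = E v u.

Definition connected_graph (E : rel V) :=
  forall u v, clos_refl_trans V (fun x y => E x y) u v.

Definition transition_on (E : rel V) (P : V -> V -> R) :=
  (forall u v, 0 <= P u v) /\
  (forall u v, 0 < P u v -> E u v) /\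
  (forall u, (\esum_(w in [set: V]) (P u w)%:E = 1)%E).

Definition irreducible (P : V -> V -> R) :=
  forall u v, exists n (x : nat -> V), x 0%N = u /\ x n = v /\
    forall i, (i < n)%N -> 0 < P (x i) (x i.+1).

(** first passage probabilities f_n(u,v) = P_u(T_v^+ = n) *)
Fixpoint first_passage (P : V -> V -> R) (n : nat) : V -> V -> \bar R :=
  match n with
  | 0%N => fun _ _ => 0%E
  | m.+1 => fun u v =>
      match m with
      | 0%N => (P u v)%:E
      | _ => (\esum_(w in [set w | w != v]) ((P u w)%:E * first_passage P m w v))%E
      end
  end.

Definition recurrent (P : V -> V -> R) :=
  forall u, (\esum_(n in [set n : nat | (0 < n)%N]) first_passage P n u u = 1)%E.

End Graph.

Section Golf.
Variables (R : realType) (V : countType) (d : measure_display)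
  (Omega : measurableType d) (Pr : probability Omega R).

Definition independent_family (I : choiceType) (F : I -> set (set Omega)) :=
  forall (J : {fset I}) (A : I -> set Omega),
    (forall i, i \in J -> F i (A i)) ->
    Pr (\bigcap_(i in [set` J]) A i) = (\prod_(i <- J) Pr (A i))%E.

Variables (init : V -> Omega -> site) (C : V -> Omega -> R)
  (W : V -> nat -> Omega -> V).

Definition sigma_init : set (set Omega) :=
  <<s setT, [set A | (exists v (B : set R), measurable B /\ A = C v @^-1` B) \/
                     (exists v s, A = [set w | init v w = s])] >>.

Definition sigma_walk (v : V) : set (set Omega) :=
  <<s setT, [set A | exists n u, A = [set w | W v n w = u]] >>.

Definition golf_sigma (i : option V) : set (set Omega) :=
  match i with None => sigma_init | Some v => sigma_walk v end.

(** A golf process with transition matrix P, initial configuration [init]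
    (B^0 = balls, H^0 = holes), clocks [C], and for every vertex v the
    P-random walk [W v] that the ball at v (if any) performs. *)
Definition golf_process (P : V -> V -> R) :=
  (forall v w, init v w <> SStar) /\
  (forall v s, measurable [set w | init v w = s]) /\
  (forall v, measurable_fun setT (C v)) /\
  (forall v w, 0 < C v w < 1) /\
  {ae Pr, forall w, forall u v, u != v -> C u w != C v w} /\
  (forall v n u, measurable [set w | W v n w = u]) /\
  (forall v (x : nat -> V) n,
     Pr [set w | forall i, (i <= n)%N -> W v i w = x i] =
     ((x 0%N == v)%:R * \prod_(i < n) P (x i) (x i.+1))%:E) /\
  independent_family golf_sigma.

Definition B0 (w : Omega) : set V := [set v | init v w = SBall].
Definition H0 (w : Omega) : set V := [set v | init v w = SHole].

Definition well_defined (w : Omega) :=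
  finite_set (B0 w) /\ (forall u v, u != v -> C u w != C v w).

Definition minball (w : Omega) (c : V -> site) (v : V) :=
  c v = SBall /\ forall u, c u = SBall -> C v w <= C u w.

Definition step (w : Omega) (c : V -> site) : V -> site :=
  match pselect (exists v, minball w c v) with
  | left H =>
      let v := projT1 (cid H) in
      match pselect (exists n, c (W v n w) = SHole) with
      | left Hn =>
          let n := @ex_minn (fun n => `[< c (W v n w) = SHole >])
                     (let: ex_intro n Hn' := Hn in
                      ex_intro _ n (asboolT Hn')) in
          let h := W v n w in
          fun u => if (u == v) || (u == h) then SZero else c u
      | right _ => fun _ => SStar
      end
  | right _ => c
  end.

Definition nactivated (w : Omega) (t : R) : nat :=
  size (fset_set [set v | init v w = SBall /\ C v w <= t]).

Definition golf (w : Omega) (t : R) : V -> site :=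
  if `[< well_defined w >] then iter (nactivated w t) (step w) (init^~ w)
  else fun _ => SStar.

Definition cadlag01_discrete (T : Type) (f : R -> T) :=
  (forall t, 0 <= t < 1 -> exists2 e, 0 < e &
     forall s, t <= s < t + e -> f s = f t) /\
  (forall t, 0 < t <= 1 -> exists2 e, 0 < e &
     exists l, forall s, t - e < s < t -> f s = l).

Definition valid :=
  (* measurability (coordinate sigma-algebra of D_S[0,1]) *)
  (forall t, 0 <= t <= 1 -> forall v s, measurable [set w | golf w t v = s]) /\
  {ae Pr, forall w,
     well_defined w /\
     (forall v, golf w 1 v <> SStar) /\
     (forall v, cadlag01_discrete (fun t => golf w t v))}.

End Golf.

(* Recurrence makes every walk visit every vertex almost surely: if the walk
   from [v] missed [u] with positive probability, then, by the Markov property,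
   the walk from [u] would follow a positive path to [v] avoiding [u] and then
   miss [u] forever, so it would fail to return to [u] with positive
   probability.
   On the almost sure event where in addition the clocks are distinct and the
   balls finitely many, the process is a deterministic sequence of moves.  As
   long as there are at least as many free holes as balls, the ball with the
   smallest clock walks until it meets a free hole and both counts drop by one,
   so the process never freezes.  Only finitely many clocks matter, so every
   trajectory is piecewise constant, and each configuration is decided by
   countably many measurable events. *)

From HB Require Import structures.
From mathcomp Require Import all_boot all_order all_algebra.
From mathcomp Require Import all_classical all_reals all_analysis.
From mathcomp Require Import finmap.

Set Implicit Arguments.
Import Order.TTheory GRing.Theory Num.Theory.
Local Open Scope classical_set_scope.
Local Open Scope ring_scope.
Local Open Scope card_scope.

Section countable_index.
Context d (T : measurableType d) (I : countType).
Implicit Types (S : set I) (F : I -> set T).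

Lemma countable_bigcup_measurable S F :
  (forall i, S i -> measurable (F i)) -> measurable (\bigcup_(i in S) F i).
Proof.
move=> mF; rewrite bigcup_mkcond.
apply: countable_bigcupT_measurable => [|i]; first exact: countableP.
by case: ifPn => // /set_mem; exact: mF.
Qed.

Lemma countable_bigcap_measurable S F :
  (forall i, S i -> measurable (F i)) -> measurable (\bigcap_(i in S) F i).
Proof.
move=> mF; rewrite -[X in measurable X]setCK setC_bigcap; apply: measurableC.
by apply: countable_bigcup_measurable => i Si; exact/measurableC/mF.
Qed.

Local Open Scope ereal_scope.

(* [x0] is a junk value for the indices outside the range of [pickle]. *)
Definition unpickle_fun {U : Type} (x0 : U) (f : I -> U) (n : nat) : U :=
  if choice.unpickle n is Some i then f i else x0.

Lemma unpickle_funK {U : Type} (x0 : U) (f : I -> U) i :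
  unpickle_fun x0 f (choice.pickle i) = f i.
Proof. by rewrite /unpickle_fun choice.pickleK. Qed.

Lemma bigcup_pickle S F :
  \bigcup_(i in S) F i = \bigcup_(n in choice.pickle @` S) unpickle_fun set0 F n.
Proof.
apply/seteqP; split=> x.
  by move=> [i Si Fx]; exists (choice.pickle i); [exists i|rewrite unpickle_funK].
by move=> [_ [i Si <-]]; rewrite unpickle_funK => Fx; exists i.
Qed.

Lemma esum_pickle (R : realType) S (a : I -> \bar R) :
  (forall i, S i -> 0 <= a i) ->
  \esum_(i in S) a i = \sum_(n <oo | n \in choice.pickle @` S) unpickle_fun 0 a n.
Proof.
move=> a0; rewrite nneseries_esum; last first.
  by move=> n /set_mem [i Si <-]; rewrite unpickle_funK; exact: a0.
rewrite set_mem_set esum_image; last first.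
  by move=> x y _ _; exact: (pcan_inj choice.pickleK).
by apply: eq_esum => i _; rewrite unpickle_funK.
Qed.

Lemma countable_esumZl (R : realType) S (a : I -> \bar R) (c : R) :
  (0 <= c)%R -> (forall i, S i -> 0 <= a i) ->
  \esum_(i in S) (c%:E * a i) = c%:E * \esum_(i in S) a i.
Proof.
move=> c0 a0; rewrite !esum_pickle//; last by move=> i Si; rewrite mule_ge0// a0.
rewrite -nneseriesZl; last by move=> n /set_mem [i Si <-]; rewrite unpickle_funK a0.
apply: eq_eseriesr => n _; rewrite /unpickle_fun.
by case: choice.unpickle; rewrite ?mule0.
Qed.

Lemma measure_countable_bigcup (R : realType) (mu : {measure set T -> \bar R})
    S F :
  (forall i, S i -> measurable (F i)) -> trivIset S F ->
  mu (\bigcup_(i in S) F i) = \esum_(i in S) mu (F i).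
Proof.
move=> mF tF; rewrite bigcup_pickle measure_bigcup; last first.
- move=> _ _ [i Si <-] [j Sj <-]; rewrite !unpickle_funK => Fij.
  by rewrite (tF i j Si Sj Fij).
- by move=> _ [i Si <-]; rewrite unpickle_funK; exact: mF.
rewrite esum_pickle//.
by apply: eq_eseriesr => n _; rewrite /unpickle_fun; case: choice.unpickle.
Qed.

End countable_index.

Lemma probability_setIr1 d (T : measurableType d) (R : realType)
    (Pr : probability T R) (A B : set T) :
  measurable A -> measurable B -> Pr B = 1%E -> Pr (A `&` B) = Pr A.
Proof.
move=> mA mB PB1.
have PCB0 : Pr (~` B) = 0%E by rewrite probability_setC // PB1 subee.
rewrite [RHS](measureDI Pr mA mB) [X in (X + _)%E](_ : _ = 0%E) ?add0e//.
by apply: (subset_measure0 (measurableD mA mB) (measurableC mB)) PCB0 => w [].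
Qed.

Section random_walk.
Context (R : realType) (V : countType) d (Omega : measurableType d)
  (Pr : probability Omega R) (P : V -> V -> R) (W : V -> nat -> Omega -> V).
Hypothesis P_ge0 : forall u v, 0 <= P u v.
Hypothesis W_measurable : forall v n u, measurable [set w | W v n w = u].
Hypothesis W_law : forall v (x : nat -> V) n,
  Pr [set w | forall i, (i <= n)%N -> W v i w = x i] =
  ((x 0%N == v)%:R * \prod_(i < n) P (x i) (x i.+1))%:E.

Local Open Scope ereal_scope.

Lemma walk_constraint_measurable v (f : nat -> nat) (x : nat -> V)
    (p : nat -> bool) :
  measurable [set w | forall j, p j -> W v (f j) w = x j].
Proof.
rewrite (_ : mkset _ = \bigcap_(j in [set j | p j]) [set w | W v (f j) w = x j]).
  by apply: bigcap_measurableType => j _; exact: W_measurable.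
by apply/seteqP; split => w /= h j /h.
Qed.

Definition walk_cylinder v n (x : nat -> V) :=
  [set w | forall i, (i <= n)%N -> W v i w = x i].

Definition walk_path_event v k N (y : nat -> V) :=
  [set w | forall j, (j <= N)%N -> W v (k + j) w = y j].

Lemma walk_cylinder_measurable v n x : measurable (walk_cylinder v n x).
Proof. exact: walk_constraint_measurable. Qed.

Lemma walk_path_event_measurable v k N y : measurable (walk_path_event v k N y).
Proof. exact: walk_constraint_measurable. Qed.

Lemma walk_start v : Pr [set w | W v 0 w = v] = 1.
Proof.
rewrite (_ : mkset _ = walk_cylinder v 0 (fun=> v)).
  by rewrite [LHS]W_law eqxx big_ord0 mulr1.
apply/seteqP; split => w /=; last exact.
by move=> h i; rewrite leqn0 => /eqP ->.
Qed.

Lemma walk_startI v A : measurable A ->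
  Pr (A `&` [set w | W v 0 w = v]) = Pr A.
Proof. by move=> mA; rewrite probability_setIr1 ?walk_start. Qed.

Definition path_cat k (x y : nat -> V) i := if (i <= k)%N then x i else y (i - k)%N.

Lemma walk_cylinder_cat u k N (x y : nat -> V) : y 0%N = x k ->
  walk_cylinder u k x `&` walk_path_event u k N y =
  walk_cylinder u (k + N) (path_cat k x y).
Proof.
move=> y0; rewrite /path_cat; apply/seteqP; split => w /=.
  move=> [hx hy] i ikN; case: ifPn => ik; first exact: hx.
  rewrite -hy ?subnKC ?leq_subLR// ltnW// ltnNge//.
move=> h; split => [i ik|j jN].
  by rewrite h ?ik// (leq_trans ik)// leq_addr.
rewrite h ?leq_add2l//; case: ifPn => [|_]; last by rewrite addKn.
by rewrite -{2}(addn0 k) leq_add2l leqn0 => /eqP ->; rewrite addn0.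
Qed.

Lemma walk_markov_path u k N (x y : nat -> V) :
  Pr (walk_cylinder u k x `&` walk_path_event u k N y) =
  ((x 0%N == u)%:R * \prod_(i < k) P (x i) (x i.+1))%:E *
  Pr (walk_path_event (x k) 0 N y).
Proof.
rewrite [Pr (walk_path_event _ _ _ _)]W_law.
have [y0|y0] := eqVneq (y 0%N) (x k); last first.
  rewrite (_ : _ `&` _ = set0) ?measure0 ?mul0r ?mule0//.
  apply/seteqP; split => // w [hx hy]; move/eqP: y0; apply.
  by rewrite -[y 0%N]hy// addn0 hx.
rewrite walk_cylinder_cat// W_law mul1r -EFinM /path_cat leq0n big_split_ord /=.
rewrite mulrA; congr (_ * _)%:E.
  by congr (_ * _)%R; apply: eq_bigr => i _; rewrite ltnW ?ltn_ord // ltn_ord.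
apply: eq_bigr => i _.
rewrite !(leqNgt _ k) ltnS.
case: (ltnP k (k + i)) => ki; last first.
  have -> : val i = 0%N by move: ki; rewrite -{2}(addn0 k) leq_add2l leqn0 => /eqP.
  by rewrite /= addn0 leqnn /= y0 subSnn.
by rewrite /= leq_addr /= addKn subSn ?leq_addr // addKn.
Qed.

(* Stretches of the walk of fixed length are valued in a countable type, so
   events about them are countable unions of cylinders. *)
Definition ffun_path {N} (y : {ffun 'I_N.+1 -> V}) (i : nat) : V := y (inord i).

Definition walk_segment v k N w : {ffun 'I_N.+1 -> V} :=
  [ffun j : 'I_N.+1 => W v (k + j) w].

Definition segment_event v k N (Q : set {ffun 'I_N.+1 -> V}) :=
  [set w | Q (walk_segment v k N w)].
Arguments segment_event : clear implicits.

Lemma walk_segment_path v k N w j :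
  (j <= N)%N -> ffun_path (walk_segment v k N w) j = W v (k + j) w.
Proof. by move=> jN; rewrite /ffun_path ffunE inordK. Qed.

Lemma walk_segmentP {v k N w y} :
  walk_path_event v k N (ffun_path y) w -> walk_segment v k N w = y.
Proof.
move=> h; apply/ffunP => j; rewrite ffunE h ?(leq_ord j)//.
by rewrite /ffun_path inord_val.
Qed.

Lemma segment_eventE v k N Q : segment_event v k N Q =
  \bigcup_(y in Q) walk_path_event v k N (ffun_path y).
Proof.
apply/seteqP; split => w /=.
  by move=> Qw; exists (walk_segment v k N w) => // j jN; rewrite walk_segment_path.
by move=> [y Qy h]; rewrite /segment_event /= (walk_segmentP h).
Qed.

Lemma segment_event_measurable v k N Q : measurable (segment_event v k N Q).
Proof.
rewrite segment_eventE; apply: countable_bigcup_measurable => y _.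
exact: walk_path_event_measurable.
Qed.

Lemma trivIset_walk_path_event v k N (Q : set {ffun 'I_N.+1 -> V}) :
  trivIset Q (fun y => walk_path_event v k N (ffun_path y)).
Proof.
by move=> y y' _ _ [w [h h']]; rewrite -(walk_segmentP h) -(walk_segmentP h').
Qed.

Lemma walk_markov u k (x : nat -> V) N (Q : set {ffun 'I_N.+1 -> V}) :
  Pr (walk_cylinder u k x `&` segment_event u k N Q) =
  ((x 0%N == u)%:R * \prod_(i < k) P (x i) (x i.+1))%:E *
  Pr (segment_event (x k) 0 N Q).
Proof.
have c_ge0 : (0 <= (x 0%N == u)%:R * \prod_(i < k) P (x i) (x i.+1))%R.
  by rewrite mulr_ge0 ?prodr_ge0 ?ler0n.
rewrite !segment_eventE setI_bigcupr !measure_countable_bigcup.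
- rewrite -countable_esumZl//; apply: eq_esum => y _; exact: walk_markov_path.
- by move=> y _; exact: walk_path_event_measurable.
- exact: trivIset_walk_path_event.
- move=> y _; apply: measurableI; first exact: walk_cylinder_measurable.
  exact: walk_path_event_measurable.
- move=> y y' _ _ [w [[_ h] [_ h']]].
  by rewrite -(walk_segmentP h) -(walk_segmentP h').
Qed.

Lemma walk_avoid_measurable v u (p : pred nat) :
  measurable [set w | forall n, p n -> W v n w <> u].
Proof.
rewrite (_ : mkset _ = \bigcap_(n in [set n | p n]) ~` [set w | W v n w = u]).
  by apply: bigcap_measurableType => n _; exact: measurableC.
by apply/seteqP; split => w /= h n /h.
Qed.

Lemma walk_never_hits_measurable v u : measurable [set w | forall n, W v n w <> u].
Proof.
rewrite (_ : mkset _ = [set w | forall n, predT n -> W v n w <> u]).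
  exact: walk_avoid_measurable.
by apply/seteqP; split => w /= h n //; apply: h.
Qed.

Definition first_hit v u n :=
  [set w | W v n w = u /\ forall i, (0 < i < n)%N -> W v i w <> u].

Lemma first_hit_measurable v u n : measurable (first_hit v u n).
Proof.
apply: measurableI; first exact: W_measurable.
exact: (walk_avoid_measurable v u (fun i => 0 < i < n)%N).
Qed.

Definition first_hit_path N u : set {ffun 'I_N.+1 -> V} :=
  [set y | ffun_path y N = u /\ forall j, (0 < j < N)%N -> ffun_path y j <> u].
Arguments first_hit_path : clear implicits.

Lemma segment_event_first_hit v k N u :
  segment_event v k N (first_hit_path N u) =
  [set w | W v (k + N) w = u /\ forall j, (0 < j < N)%N -> W v (k + j) w <> u].
Proof.
apply/seteqP; split => w [hN hj] /=.
  split; first by rewrite -(walk_segment_path v k N).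
  by move=> j /[dup] /andP[_ /ltnW jN] /hj; rewrite -(walk_segment_path v k N).
split; first by rewrite walk_segment_path.
by move=> j /[dup] /andP[_ /ltnW jN] /hj; rewrite walk_segment_path.
Qed.

Definition first_step v (x : V) (i : nat) := if i == 0%N then v else x.

Lemma first_hit_first_step v u n :
  first_hit v u n.+2 `&` [set w | W v 0 w = v] =
  \bigcup_(x in [set x | x != u])
    (walk_cylinder v 1 (first_step v x) `&`
     segment_event v 1 n.+1 (first_hit_path n.+1 u)).
Proof.
rewrite segment_event_first_hit; apply/seteqP; split => w /=.
  move=> [[hn hi] h0]; exists (W v 1 w); first exact/eqP/hi.
  split; first by case => [|[|i]].
  split => // j /andP[_ jn]; apply: hi.
  by rewrite add1n; apply/andP; split; last rewrite ltnS.
move=> [x xu [hc [hn hj]]]; split; last exact: (hc 0%N).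
split => // -[|[|i]] // /andP[_ ilt].
  by rewrite (hc 1%N)//; apply/eqP.
by rewrite -add1n; apply: hj.
Qed.

Lemma first_passage_first_hit u n v :
  first_passage P n.+1 v u = Pr (first_hit v u n.+1).
Proof.
elim: n v => [|n IH] v; rewrite -(walk_startI v _ (first_hit_measurable v u _)).
  rewrite (_ : _ `&` _ = walk_cylinder v 1 (first_step v u)) ?W_law.
    by rewrite eqxx big_ord1 mul1r.
  apply/seteqP; split => w /=.
    by move=> [[h1 _] h0] [|[|i]].
  by move=> h; split; [split; [exact: (h 1%N)|case => [|[|]]]|exact: (h 0%N)].
rewrite (_ : first_passage P n.+2 v u = \esum_(x in [set x | x != u])
  ((P v x)%:E * first_passage P n.+1 x u))//.
rewrite first_hit_first_step measure_countable_bigcup; first last.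
- move=> x x' _ _ [w [[h _] [h' _]]].
  by rewrite -[x]/(first_step v x 1) -(h 1%N)// (h' 1%N).
- move=> x _; apply: measurableI; first exact: walk_cylinder_measurable.
  exact: segment_event_measurable.
apply: eq_esum => x _; symmetry; etransitivity; first exact: walk_markov.
by rewrite eqxx big_ord1 mul1r IH segment_event_first_hit.
Qed.

Lemma walk_returns u : recurrent P ->
  Pr [set w | forall n, (0 < n)%N -> W u n w <> u] = 0.
Proof.
move=> rec; have mN := walk_avoid_measurable u u (leq 1).
have tF : trivIset [set n | (0 < n)%N] (first_hit u u).
  move=> n m n0 m0 [w [[hn hin] [hm him]]].
  case: (ltngtP n m) => // nm; exfalso.
    by apply: (him n) hn; rewrite n0 nm.
  by apply: (hin m) hm; rewrite m0 nm.
have mU : measurable (\bigcup_(n in [set n | (0 < n)%N]) first_hit u u n).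
  by apply: bigcup_measurable => n _; exact: first_hit_measurable.
have PU1 : Pr (\bigcup_(n in [set n | (0 < n)%N]) first_hit u u n) = 1.
  rewrite measure_bigcup//; last by move=> n _; exact: first_hit_measurable.
  rewrite -[RHS](rec u) nneseries_esum// set_mem_set; apply: eq_esum => -[|n]// _.
  by rewrite first_passage_first_hit.
have PCU0 : Pr (~` \bigcup_(n in [set n | (0 < n)%N]) first_hit u u n) = 0.
  by rewrite probability_setC // PU1 subee.
apply: (subset_measure0 mN (measurableC mU)) PCU0.
by move=> w h [n n0 [hn _]]; exact: (h n n0 hn).
Qed.

Lemma positive_path_avoiding_start u n (x : nat -> V) : x 0%N = u ->
  (forall i, (i < n)%N -> 0 < P (x i) (x i.+1))%R -> x n <> u ->
  exists k (y : nat -> V), [/\ y 0%N = u, y k = x n,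
    (forall i, (i < k)%N -> 0 < P (y i) (y i.+1))%R &
    (forall i, (0 < i <= k)%N -> y i <> u)].
Proof.
elim: n => [|n IH] x0 pos xn; first by rewrite x0 in xn.
have [xnu|xnu] := eqVneq (x n) u.
  exists 1%N, (first_step u (x n.+1)); split => //.
    by case => // _; rewrite /= -xnu; apply: pos.
  by case => [|[|]].
have [k [y [y0 yk ypos yav]]] := IH x0 (fun i lt => pos i (ltnW lt)) (elimN eqP xnu).
exists k.+1, (path_cat k y (fun=> x n.+1)); rewrite /path_cat; split.
- by rewrite leq0n.
- by rewrite ltnn.
- move=> i; rewrite ltnS => ik; have [->|ne] := eqVneq i k.
    by rewrite leqnn ltnn yk; apply: pos.
  have ik' : (i < k)%N by rewrite ltn_neqAle ne ik.
  by rewrite ik ik'; apply: ypos.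
- move=> i /andP[i0 ik]; have [->|ne] := eqVneq i k.+1; first by rewrite ltnn.
  have ik' : (i <= k)%N by rewrite -ltnS ltn_neqAle ne ik.
  by rewrite ik'; apply: yav; rewrite i0.
Qed.

Definition no_return_until u M :=
  [set w | forall i, (0 < i <= M)%N -> W u i w <> u].

Definition avoid_until v u N := [set w | forall j, (j <= N)%N -> W v j w <> u].

Lemma no_return_until_measurable u M : measurable (no_return_until u M).
Proof. exact: (walk_avoid_measurable u u (fun i => 0 < i <= M)%N). Qed.

Lemma avoid_until_measurable v u N : measurable (avoid_until v u N).
Proof. exact: (walk_avoid_measurable v u (leq^~ N)). Qed.

(* By the Markov property at time [k]: first follow [y] from [u] to [v] without
   returning to [u], then avoid [u] for [N] more steps. *)
Lemma avoid_until_le_no_return u v k (y : nat -> V) N :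
  y 0%N = u -> y k = v -> (forall i, (0 < i <= k)%N -> y i <> u) ->
  (\prod_(i < k) P (y i) (y i.+1))%:E * Pr (avoid_until v u N) <=
  Pr (no_return_until u (k + N)).
Proof.
move=> y0 yk yav.
pose A : set {ffun 'I_N.+1 -> V} :=
  [set z | forall j, (j <= N)%N -> ffun_path z j <> u].
have mA : measurable (segment_event u k N A) by exact: segment_event_measurable.
have -> : avoid_until v u N = segment_event v 0 N A.
  apply/seteqP; split => w /= h j jN; first by rewrite walk_segment_path//; exact: h.
  by have := h j jN; rewrite walk_segment_path.
have -> : (\prod_(i < k) P (y i) (y i.+1))%:E * Pr (segment_event v 0 N A) =
    Pr (walk_cylinder u k y `&` segment_event u k N A).
  by rewrite walk_markov y0 eqxx mul1r yk.
apply: le_measure.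
- by apply/mem_set/measurableI; [exact: walk_cylinder_measurable|exact: mA].
- exact/mem_set/no_return_until_measurable.
move=> w [hc hs] i /andP[i0 ikN]; have [ik|ki] := leqP i k.
  by rewrite hc//; apply: yav; rewrite i0 ik.
have := hs (i - k)%N; rewrite walk_segment_path ?subnKC ?(ltnW ki)//; first apply.
all: by rewrite leq_subLR.
Qed.

Lemma no_return_until_cvg u :
  Pr \o no_return_until u @ \oo -->
  Pr [set w | forall n, (0 < n)%N -> W u n w <> u].
Proof.
rewrite (_ : mkset _ = \bigcap_M no_return_until u M); last first.
  apply/seteqP; split => w /=; first by move=> h M _ i /andP[i0 _]; exact: h.
  by move=> h n n0; apply: (h n) => //; rewrite n0 leqnn.
apply: nonincreasing_cvg_mu.
- rewrite (le_lt_trans (probability_le1 Pr _)) ?ltey//.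
  exact: no_return_until_measurable.
- exact: no_return_until_measurable.
- by apply: bigcapT_measurable => M; exact: no_return_until_measurable.
- move=> a b ab; rewrite subsetEset => w h i /andP[i0 ib]; apply: h.
  by rewrite i0 (leq_trans ib ab).
Qed.

Lemma walk_hits v u : recurrent P -> irreducible P ->
  Pr [set w | forall n, W v n w <> u] = 0.
Proof.
move=> rec irr; set A := mkset _; have mA := walk_never_hits_measurable v u.
have [vu|vu] := eqVneq v u.
  have PC0 : Pr (~` [set w | W v 0 w = v]) = 0.
    by rewrite probability_setC ?walk_start ?subee.
  apply: (subset_measure0 mA (measurableC (W_measurable v 0 v))) PC0.
  by move=> w h /= e; apply: (h 0%N); rewrite e.
have [n [x [x0 [xn xpos]]]] := irr u v.
have [k [y [y0 yk ypos yav]]] :=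
  @positive_path_avoiding_start u n x x0 xpos
    (fun e => elimN eqP vu (etrans (esym xn) e)).
rewrite xn in yk.
have c_gt0 : (0 < \prod_(i < k) P (y i) (y i.+1))%R.
  by apply: prodr_gt0 => i _; exact: ypos.
have le_return N : (\prod_(i < k) P (y i) (y i.+1))%:E * Pr A <=
    Pr (no_return_until u (k + N)).
  apply: le_trans (@avoid_until_le_no_return u v k y N y0 yk yav).
  apply: lee_wpmul2l; first by rewrite lee_fin ltW.
  apply: le_measure; [exact/mem_set|exact/mem_set/avoid_until_measurable|].
  by move=> w h j _; exact: h.
have : (\prod_(i < k) P (y i) (y i.+1))%:E * Pr A <= 0.
  rewrite -(walk_returns u rec) -(cvg_lim _ (no_return_until_cvg u))//.
  apply: lime_ge; first by apply/cvg_ex; eexists; exact: no_return_until_cvg.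
  near=> M; have kM : (k <= M)%N by near: M; exact: nbhs_infty_ge.
  by rewrite /= -(subnKC kM); exact: le_return.
rewrite muleC pmule_lle0 ?lte_fin// => PA0.
by apply/eqP; rewrite eq_le PA0 measure_ge0.
Unshelve. all: by end_near.
Qed.

Lemma ae_walks_hit_all : recurrent P -> irreducible P ->
  {ae Pr, forall w, forall v u, exists n, W v n w = u}.
Proof.
move=> rec irr.
have ae_hit v u : {ae Pr, forall w, exists n, W v n w = u}.
  exists [set w | forall n, W v n w <> u]; split.
  - exact: walk_never_hits_measurable.
  - exact: walk_hits.
  - by move=> w /= h n e; apply: h; exists n.
have := @ae_foralln _ _ _ Pr (fun n w =>
  if choice.unpickle n is Some (v, u) then exists k, W v k w = u else True).
case=> [n|N [mN N0 sN]].
  by case: (choice.unpickle n) => [[v u]|]; [exact: ae_hit|exact: aeW].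
exists N; split => // w /= h; apply: sN => /= h'; apply: h => v u.
by have := h' (choice.pickle (v, u)); rewrite choice.pickleK.
Qed.

End random_walk.

Section finite_gaps.
Context {R : realDomainType} {T : eqType} (f : T -> R).

Lemma seq_min_exists {s : seq T} : s != [::] ->
  exists2 x, x \in s & forall y, y \in s -> f x <= f y.
Proof.
elim: s => // a s IH _; have [->|s0] := eqVneq s [::].
  by exists a; rewrite ?mem_seq1 // => y; rewrite mem_seq1 => /eqP ->.
have [x xs xmin] := IH s0; have [ax|xa] := leP (f a) (f x).
  exists a; first exact: mem_head.
  by move=> y; rewrite in_cons => /orP[/eqP ->//|/xmin]; exact: le_trans.
exists x; first by rewrite in_cons xs orbT.
by move=> y; rewrite in_cons => /orP[/eqP ->|/xmin//]; exact: ltW.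
Qed.

Lemma seq_gap_right (s : seq T) t : exists2 e, 0 < e &
  forall x, x \in s -> f x <= t \/ t + e <= f x.
Proof.
elim: s => [|a s [e e0 IH]]; first by exists 1.
have [at_|ta] := leP (f a) t.
  by exists e => // x; rewrite in_cons => /orP[/eqP ->|/IH//]; left.
exists (Num.min e (f a - t)); first by rewrite lt_min e0 subr_gt0.
move=> x; rewrite in_cons => /orP[/eqP ->|/IH[|xe]]; [|by left|].
  by right; rewrite -lerBrDl ge_min lexx orbT.
by right; apply: le_trans xe; rewrite lerD2l ge_min lexx.
Qed.

Lemma seq_gap_left (s : seq T) t : exists2 e, 0 < e &
  forall x, x \in s -> t <= f x \/ f x <= t - e.
Proof.
elim: s => [|a s [e e0 IH]]; first by exists 1.
have [ta|at_] := leP t (f a).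
  by exists e => // x; rewrite in_cons => /orP[/eqP ->|/IH//]; left.
exists (Num.min e (t - f a)); first by rewrite lt_min e0 subr_gt0.
move=> x; rewrite in_cons => /orP[/eqP ->|/IH[|xe]]; [|by left|].
  by right; rewrite lerBrDl -lerBrDr ge_min lexx orbT.
by right; apply: le_trans xe _; rewrite lerD2l lerN2 ge_min lexx.
Qed.

End finite_gaps.

Section golf_trajectory.
Context (R : realType) (V : countType) d (Omega : measurableType d)
  (init : V -> Omega -> site) (C : V -> Omega -> R)
  (W : V -> nat -> Omega -> V) (w : Omega).
Hypothesis clocks_distinct : forall u v, u != v -> C u w != C v w.

Lemma minball_uniq {c v1 v2} : minball C w c v1 -> minball C w c v2 -> v1 = v2.
Proof.
move=> [b1 m1] [b2 m2]; apply/eqP; apply: contraT => ne.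
have := clocks_distinct _ _ ne.
by rewrite (@le_anti _ _ (C v1 w) (C v2 w)) ?m1 ?m2 ?eqxx.
Qed.

Lemma step_no_ball c : (forall v, ~ minball C w c v) -> step C W w c = c.
Proof.
move=> h; rewrite /step; case: pselect => // H.
by exfalso; case: H => v /h.
Qed.

Lemma step_frozen {c v} : minball C w c v -> (forall n, c (W v n w) <> SHole) ->
  step C W w c = fun=> SStar.
Proof.
move=> mv nh; rewrite /step; case: pselect => [H|[]]; last by exists v.
case: (cid H) => v' mv' /=; have ev := minball_uniq mv' mv; subst v'.
case: pselect => // Hn.
by exfalso; case: Hn => n /nh.
Qed.

Lemma step_fill {c v n} : minball C w c v -> c (W v n w) = SHole ->
  (forall j, (j < n)%N -> c (W v j w) <> SHole) ->
  step C W w c = fun u => if (u == v) || (u == W v n w) then SZero else c u.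
Proof.
move=> mv hn hj; rewrite /step; case: pselect => [H|[]]; last by exists v.
case: (cid H) => v' mv' /=; have ev := minball_uniq mv' mv; subst v'.
case: pselect => [Hn|[]]; last by exists n.
case: ex_minnP => m /asboolP hm hmin.
suff -> : m = n by [].
apply/eqP; rewrite eqn_leq hmin ?andbT; last exact/asboolP.
by rewrite leqNgt; apply/negP => /hj.
Qed.

Definition enough_holes (c : V -> site) (n : nat) := exists bl hl : seq V,
  [/\ uniq bl, uniq hl, size bl = n & (size bl <= size hl)%N] /\
  [/\ (forall u, c u = SBall <-> u \in bl), (forall h, h \in hl -> c h = SHole)
    & (forall u, c u <> SStar)].

Hypothesis walks_hit : forall v u, exists n, W v n w = u.

Lemma enough_holes_step c n : enough_holes c n.+1 -> enough_holes (step C W w c) n.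
Proof.
move=> [bl [hl [[ubl uhl sbl shl] [hb hh hs]]]].
have [v vbl vmin] : exists2 v, v \in bl & forall u, u \in bl -> C v w <= C u w.
  by apply: seq_min_exists; rewrite -size_eq0 sbl.
have mv : minball C w c v by split; [exact/hb|move=> u /hb; exact: vmin].
have [h0 h0hl] : exists h, h \in hl.
  by case: hl uhl shl hh => [|h hl]; [rewrite sbl|exists h; exact: mem_head].
have hit_hole : exists m, `[< c (W v m w) = SHole >].
  by have [m e] := walks_hit v h0; exists m; apply/asboolP; rewrite e hh.
case: (ex_minnP hit_hole) => m /asboolP hm hmin.
rewrite (step_fill mv hm); last by move=> j jm /asboolP/hmin; rewrite leqNgt jm.
move: (W v m w) hm => h hm.
have vB : c v = SBall by apply/hb.
have hv : h != v by apply: contraPneq hm => ->; rewrite vB.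
exists (rem v bl), (rem h hl); split; split.
- exact: rem_uniq.
- exact: rem_uniq.
- by rewrite size_rem // sbl.
- rewrite size_rem //; have [hin|hnin] := boolP (h \in hl).
    by rewrite size_rem // -!subn1 leq_sub2r.
  by rewrite rem_id // (leq_trans _ shl) // leq_pred.
- move=> u; rewrite (mem_rem_uniq _ ubl) inE.
  have [->|uv] := eqVneq u v; first by split.
  have [->|uh] := eqVneq u h; last exact: hb.
  by split => // /hb; rewrite hm.
- move=> h'; rewrite (mem_rem_uniq _ uhl) inE => /andP[h'h h'hl].
  have h'v : h' != v by apply: contraPneq (hh _ h'hl) => ->; rewrite vB.
  by rewrite (negPf h'v) (negPf h'h); exact: hh.
- by move=> u; case: ifP.
Qed.

Lemma enough_holes_iter c N k : enough_holes c N -> (k <= N)%N ->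
  enough_holes (iter k (step C W w) c) (N - k).
Proof.
move=> hc; elim: k => [|k IH] kN; first by rewrite subn0.
by rewrite iterS; apply: enough_holes_step; rewrite subnSK //; apply: IH; exact: ltnW.
Qed.

Lemma golf_well_defined t : well_defined init C w ->
  golf init C W w t = iter (nactivated init C w t) (step C W w) (init^~ w).
Proof. by move=> wd; rewrite /golf asboolT. Qed.

Lemma golf_ill_defined t : ~ well_defined init C w -> golf init C W w t = fun=> SStar.
Proof. by move=> wd; rewrite /golf asboolF. Qed.

Lemma eq_nactivated s1 s2 :
  (forall v, init v w = SBall -> (C v w <= s1 <-> C v w <= s2)) ->
  nactivated init C w s1 = nactivated init C w s2.
Proof.
move=> h; rewrite /nactivated; congr (size (fset_set _)).
by apply/seteqP; split => v /= [hv hc]; split => //; apply/(h v hv).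
Qed.

Hypothesis init_not_frozen : forall v, init v w <> SStar.
Hypothesis finite_balls : finite_set (B0 init w).

Lemma enough_holes_init : B0 init w #<= H0 init w ->
  enough_holes (init^~ w) (size (fset_set (B0 init w))).
Proof.
move=> le.
have [Hs sHs cHs] : exists2 Hs : {fset V}, [set` Hs] `<=` H0 init w &
    (size (fset_set (B0 init w)) <= size Hs)%N.
  have [finH|infH] := pselect (finite_set (H0 init w)); last first.
    exact: infinite_set_fset.
  exists (fset_set (H0 init w)).
    by move=> h /=; rewrite in_fset_set // => /set_mem.
  have [m Bm] := (finite_setP _).1 finite_balls.
  rewrite (card_fset_set Bm); apply: leq_card_fset_set => //.
  by rewrite -(card_le_eql Bm).
exists (fset_set (B0 init w)), Hs; split; split => //; try exact: fset_uniq.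
by move=> u; rewrite in_fset_set //; split => [/mem_set|/set_mem].
Qed.

Hypothesis clocks01 : forall v, 0 < C v w < 1.

Lemma golf_not_frozen : B0 init w #<= H0 init w ->
  forall v, golf init C W w 1 v <> SStar.
Proof.
move=> le v; rewrite golf_well_defined; last exact: conj finite_balls clocks_distinct.
have -> : nactivated init C w 1 = size (fset_set (B0 init w)).
  rewrite /nactivated; congr (size (fset_set _)).
  apply/seteqP; split => u /=; first by case.
  by move=> hu; split => //; have /andP[_ /ltW] := clocks01 u.
have := enough_holes_iter _ (enough_holes_init le) (leqnn _).
by rewrite subnn => -[bl [hl [_ [_ _ hs]]]]; exact: hs.
Qed.

(* Only the finitely many clocks of balls matter, and they leave a gap on
   either side of [t]. *)
Lemma golf_cadlag v : cadlag01_discrete (fun t => golf init C W w t v).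
Proof.
have wd : well_defined init C w by split.
have inB u : init u w = SBall -> u \in (fset_set (B0 init w) : seq V).
  by move=> hu; rewrite in_fset_set //; exact: mem_set.
split=> t _.
  have [e e0 he] := seq_gap_right (C^~ w) (fset_set (B0 init w)) t.
  exists e => // s /andP[ts se]; rewrite !golf_well_defined //.
  congr (iter _ _ _ v); apply: eq_nactivated => u /inB /he [h|h]; split => hs.
  - exact: h.
  - exact: le_trans h ts.
  - by move: (lt_le_trans se h); rewrite ltNge hs.
  - by move: (le_trans h hs); rewrite gerDl leNgt e0.
have [e e0 he] := seq_gap_left (C^~ w) (fset_set (B0 init w)) t.
exists e => //; exists (golf init C W w (t - e) v) => s /andP[tes st].
rewrite !golf_well_defined //; congr (iter _ _ _ v).
apply: eq_nactivated => u /inB /he [h|h]; split => hs.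
- by move: (lt_le_trans st h); rewrite ltNge hs.
- by move: (le_trans h hs); rewrite lerBrDr gerDl leNgt e0.
- exact: h.
- exact: le_trans hs (ltW tes).
Qed.

End golf_trajectory.

Lemma measurable_prop d (T : measurableType d) (p : Prop) :
  measurable [set _ : T | p].
Proof.
have [hp|hp] := pselect p.
  by rewrite (_ : mkset _ = setT) //; apply/predeqP.
by rewrite (_ : mkset _ = set0) //; apply/predeqP.
Qed.

Section measurability.
Context (R : realType) (V : countType) d (Omega : measurableType d)
  (init : V -> Omega -> site) (C : V -> Omega -> R) (W : V -> nat -> Omega -> V).
Hypothesis init_measurable : forall v s, measurable [set w | init v w = s].
Hypothesis C_measurable : forall v, measurable_fun setT (C v).
Hypothesis W_measurable : forall v n u, measurable [set w | W v n w = u].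

Lemma measurable_clock_le u v : measurable [set w | C u w <= C v w].
Proof.
rewrite -[X in measurable X]setTI.
exact: measurable_fun_le (C_measurable u) (C_measurable v).
Qed.

Lemma measurable_clock_le_cst v (t : R) : measurable [set w | C v w <= t].
Proof.
rewrite -[X in measurable X]setTI.
exact: measurable_fun_le (C_measurable v) (measurable_cst t).
Qed.

Lemma measurable_clocks_distinct :
  measurable [set w | forall u v, u != v -> C u w != C v w].
Proof.
rewrite (_ : mkset _ = \bigcap_(p in [set p : V * V | p.1 != p.2])
    ~` ([set w | C p.1 w <= C p.2 w] `&` [set w | C p.2 w <= C p.1 w])).
  apply: countable_bigcap_measurable => p _; apply: measurableC.
  by apply: measurableI; exact: measurable_clock_le.
apply/predeqP => w; split => [h [u v] /= uv [le1 le2]|h u v uv].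
  by move: (h u v uv); rewrite eq_le le1 le2.
by apply/negP => /eqP e; apply: (h (u, v) uv); rewrite /= e lexx.
Qed.

Lemma measurable_finite_balls : measurable [set w | finite_set (B0 init w)].
Proof.
rewrite (_ : mkset _ = \bigcup_(F in [set: {fset V}]) \bigcap_(v in [set: V])
    (if v \in F then [set w | init v w = SBall] else ~` [set w | init v w = SBall])).
  apply: countable_bigcup_measurable => F _.
  apply: countable_bigcap_measurable => v _; case: ifP => _ //.
  exact: measurableC.
apply/predeqP => w; split => [finB|[F _ hF]].
  exists (fset_set (B0 init w)) => // v _; rewrite in_fset_set //.
  by case: ifPn => [/set_mem|/negP hv] //= hB; apply: hv; exact: mem_set.
apply: (sub_finite_set _ (finite_fset F)) => v hB /=.
by apply/negPn/negP => vF; have := hF v I; rewrite (negbTE vF).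
Qed.

Definition well_defined_event := [set w | well_defined init C w].

Lemma measurable_well_defined : measurable well_defined_event.
Proof. exact: measurableI measurable_finite_balls measurable_clocks_distinct. Qed.

(* Off the well-definedness event the moving ball is picked by [cid] among
   possibly several minimal ones, so measurability is only tracked on it. *)
Definition wd_measurable (X : set Omega) := measurable (well_defined_event `&` X).

Lemma wd_measurableW X : measurable X -> wd_measurable X.
Proof. exact: measurableI measurable_well_defined. Qed.

Lemma wd_measurableI X Y :
  wd_measurable X -> wd_measurable Y -> wd_measurable (X `&` Y).
Proof.
move=> mX mY; rewrite /wd_measurable -[X in X `&` _]setIid setIACA.
exact: measurableI.
Qed.

Lemma wd_measurableC X : wd_measurable X -> wd_measurable (~` X).
Proof.
move=> mX; rewrite /wd_measurable.
rewrite (_ : _ `&` _ = well_defined_event `\` (well_defined_event `&` X)).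
  exact: measurableD measurable_well_defined mX.
by rewrite setDE setCI setIUr setICr set0U.
Qed.

Lemma wd_measurableU X Y :
  wd_measurable X -> wd_measurable Y -> wd_measurable (X `|` Y).
Proof.
move=> mX mY; rewrite -[X `|` Y]setCK setCU.
by apply/wd_measurableC/wd_measurableI; exact: wd_measurableC.
Qed.

Lemma wd_measurable_bigcup (I : countType) (S : set I) (F : I -> set Omega) :
  (forall i, S i -> wd_measurable (F i)) -> wd_measurable (\bigcup_(i in S) F i).
Proof.
by move=> mF; rewrite /wd_measurable setI_bigcupr; exact: countable_bigcup_measurable.
Qed.

Lemma wd_measurable_bigcap (I : countType) (S : set I) (F : I -> set Omega) :
  (forall i, S i -> wd_measurable (F i)) -> wd_measurable (\bigcap_(i in S) F i).
Proof.
move=> mF; rewrite -[X in wd_measurable X]setCK setC_bigcap; apply: wd_measurableC.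
by apply: wd_measurable_bigcup => i Si; exact/wd_measurableC/mF.
Qed.

Lemma eq_wd_measurable X Y : (forall w, well_defined init C w -> X w <-> Y w) ->
  wd_measurable Y -> wd_measurable X.
Proof.
move=> XY mY; rewrite /wd_measurable.
rewrite (_ : well_defined_event `&` X = well_defined_event `&` Y) //.
by apply/predeqP => w; split => -[wd hw]; split => //; exact/(XY w wd).
Qed.

Lemma wd_measurable_preimage (f : Omega -> V) (g : V -> Omega -> site) s :
  (forall x, measurable [set w | f w = x]) ->
  (forall x, wd_measurable [set w | g x w = s]) ->
  wd_measurable [set w | g (f w) w = s].
Proof.
move=> mf mg; rewrite (_ : mkset _ =
    \bigcup_(x in [set: V]) ([set w | f w = x] `&` [set w | g x w = s])).
  apply: wd_measurable_bigcup => x _.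
  by apply: wd_measurableI; [exact: wd_measurableW|].
by apply/predeqP => w; split => [h|[x _ [<-]]//]; exists (f w).
Qed.

Definition configuration k w := iter k (step C W w) (init^~ w).

Definition no_ball_event k u s :=
  (\bigcap_(v in [set: V]) ~` [set w | minball C w (configuration k w) v]) `&`
  [set w | configuration k w u = s].

Definition frozen_event k s := \bigcup_(v in [set: V])
  ([set w | minball C w (configuration k w) v] `&`
   \bigcap_(n in [set: nat]) ~` [set w | configuration k w (W v n w) = SHole] `&`
   [set _ | SStar = s]).

Definition fill_event k u s := \bigcup_(v in [set: V]) \bigcup_(n in [set: nat])
  ([set w | minball C w (configuration k w) v] `&`
   [set w | configuration k w (W v n w) = SHole] `&`
   \bigcap_(j in [set j | (j < n)%N])
     ~` [set w | configuration k w (W v j w) = SHole] `&`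
   [set w | (if (u == v) || (u == W v n w) then SZero else configuration k w u) = s]).

Lemma configurationS_event k u s w : well_defined init C w ->
  configuration k.+1 w u = s <->
  (no_ball_event k u s `|` frozen_event k s `|` fill_event k u s) w.
Proof.
move=> [_ distinct]; rewrite /configuration iterS -/(configuration k w).
split=> [|[[[nm cu]|[v _ [[mv hn] <-]]]|[v _ [n _ [[[mv hn] hj] <-]]]]].
- have [[v mv]|nm] := pselect (exists v, minball C w (configuration k w) v); last first.
    rewrite step_no_ball => [cu|v mv]; last by apply: nm; exists v.
    by left; left; split => // v _ mv; apply: nm; exists v.
  have [hn|nhn] := pselect (exists n, configuration k w (W v n w) = SHole); last first.
    rewrite (step_frozen W distinct mv) => [<-|n hn]; last by apply: nhn; exists n.
    left; right; exists v => //; split => //; split => // n _ hn.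
    by apply: nhn; exists n.
  have hn' : exists n, `[< configuration k w (W v n w) = SHole >].
    by case: hn => n hn; exists n; exact/asboolP.
  case: (ex_minnP hn') => m /asboolP hm hmin.
  rewrite (step_fill W distinct mv hm) => [<-|j jm /asboolP/hmin]; last first.
    by rewrite leqNgt jm.
  right; exists v => //; exists m => //; split; [split; [split|]|] => // j jm.
  by move/asboolP/hmin; rewrite leqNgt jm.
- by rewrite step_no_ball // => v mv; exact: nm v I mv.
- by rewrite (step_frozen W distinct mv) // => n; exact: hn n I.
- by rewrite (step_fill W distinct mv hn) // => j jn; apply: hj.
Qed.

Lemma wd_measurable_minball k v :
  (forall u s, wd_measurable [set w | configuration k w u = s]) ->
  wd_measurable [set w | minball C w (configuration k w) v].
Proof.
move=> mk; rewrite (_ : mkset _ = [set w | configuration k w v = SBall] `&`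
   \bigcap_(u in [set: V])
     (~` [set w | configuration k w u = SBall] `|` [set w | C v w <= C u w])).
  apply: wd_measurableI (mk v SBall) _; apply: wd_measurable_bigcap => u _.
  apply: wd_measurableU; first exact/wd_measurableC/mk.
  exact/wd_measurableW/measurable_clock_le.
apply/predeqP => w; split => [[hv hm]|[hv hm]]; split => // u.
  by have [/hm|] := pselect (configuration k w u = SBall); [right|left].
by move=> hu; case: (hm u I).
Qed.

Lemma configuration_measurable k u s :
  wd_measurable [set w | configuration k w u = s].
Proof.
elim: k u s => [|k IH] u s; first exact/wd_measurableW/init_measurable.
have hole_at v n : wd_measurable [set w | configuration k w (W v n w) = SHole].
  exact: (wd_measurable_preimage (W v n) (fun x w => configuration k w x)).
apply: (@eq_wd_measurable _
  (no_ball_event k u s `|` frozen_event k s `|` fill_event k u s)).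
  exact: configurationS_event.
apply: wd_measurableU; first apply: wd_measurableU.
- apply: wd_measurableI; last exact: IH.
  by apply: wd_measurable_bigcap => v _; exact/wd_measurableC/wd_measurable_minball.
- apply: wd_measurable_bigcup => v _.
  apply: wd_measurableI; last exact/wd_measurableW/measurable_prop.
  apply: wd_measurableI; first exact: wd_measurable_minball.
  by apply: wd_measurable_bigcap => n _; exact/wd_measurableC.
- apply: wd_measurable_bigcup => v _; apply: wd_measurable_bigcup => n _.
  apply: wd_measurableI; last first.
    apply: (wd_measurable_preimage (W v n)
      (fun x w => if (u == v) || (u == x) then SZero else configuration k w u))
      => x; first exact: W_measurable.
    by case: (_ || _); [exact/wd_measurableW/measurable_prop|exact: IH].
  apply: wd_measurableI.
    by apply: wd_measurableI; [exact: wd_measurable_minball|exact: hole_at].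
  by apply: wd_measurable_bigcap => j _; exact/wd_measurableC.
Qed.

Lemma wd_measurable_nactivated (t : R) k :
  wd_measurable [set w | nactivated init C w t = k].
Proof.
pose active w := [set v | init v w = SBall /\ C v w <= t].
apply: (@eq_wd_measurable _
  (\bigcup_(F in [set F : {fset V} | size F = k]) [set w | active w = [set` F]])).
  move=> w [finB _] /=; rewrite /nactivated -/(active w).
  have fin : finite_set (active w) by apply: sub_finite_set finB => v [].
  split => [<-|[F /= <- ->]]; last by rewrite set_fsetK.
  by exists (fset_set (active w)) => //=; rewrite fset_setK.
apply: wd_measurable_bigcup => F _; apply: wd_measurableW.
rewrite (_ : mkset _ = \bigcap_(v in [set: V]) (if v \in F
    then [set w | init v w = SBall] `&` [set w | C v w <= t]
    else ~` ([set w | init v w = SBall] `&` [set w | C v w <= t]))).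
  apply: countable_bigcap_measurable => v _.
  have mI : measurable ([set w | init v w = SBall] `&` [set w | C v w <= t]).
    exact: measurableI (init_measurable v SBall) (measurable_clock_le_cst v t).
  by case: ifP => _ //; exact: measurableC.
apply/predeqP => w; split => [e v _|h].
  case: ifP => vF; first by have : [set` F] v by []; rewrite -e.
  by move=> hv; have : active w v by []; rewrite e /= vF.
by apply/predeqP => v /=; have := h v I; case: ifP.
Qed.

Lemma golf_measurable (t : R) v s : measurable [set w | golf init C W w t v = s].
Proof.
rewrite (_ : mkset _ = (well_defined_event `&` \bigcup_(k in [set: nat])
     ([set w | nactivated init C w t = k] `&` [set w | configuration k w v = s]))
  `|` (~` well_defined_event `&` [set _ | SStar = s])).
  apply: measurableU.
    apply: wd_measurable_bigcup => k _.
    apply: wd_measurableI; first exact: wd_measurable_nactivated.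
    exact: configuration_measurable.
  exact: measurableI (measurableC measurable_well_defined) (measurable_prop _ _).
apply/predeqP => w; have [wd|nwd] := pselect (well_defined init C w).
  rewrite /= golf_well_defined //; split => [<-|[[_ [k _ [<- //]]]|[]//]].
  by left; split => //; exists (nactivated init C w t).
by rewrite /= golf_ill_defined //; split => [<-|[[]|[_ <-]]//]; right.
Qed.

End measurability.

Lemma golf_process_valid (R : realType) (V : countType) (P : V -> V -> R)
    d (Omega : measurableType d) (Pr : probability Omega R)
    (init : V -> Omega -> site) (C : V -> Omega -> R) (W : V -> nat -> Omega -> V) :
  (forall u v, 0 <= P u v) -> irreducible P -> recurrent P ->
  golf_process Pr init C W P ->
  {ae Pr, forall w, finite_set (B0 init w) /\ B0 init w #<= H0 init w} ->
  valid Pr init C W.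
Proof.
move=> P_ge0 irr rec [init_ok [init_mes [C_mes [C01 [ae_distinct [W_mes [W_law _]]]]]]].
move=> ae_fit.
split=> [t _ v s|]; first exact: golf_measurable.
have ae_hit : {ae Pr, forall w, forall v u, exists n, W v n w = u}.
  exact: ae_walks_hit_all.
apply: filterS3 ae_distinct ae_fit ae_hit => w distinct [finB fit] hit.
split; first by split.
split=> [v|v]; first exact: golf_not_frozen.
exact: golf_cadlag.
Qed.

Theorem mainTheorem8 (R : realType) :
  (forall (V : finType) (E : rel V) (P : V -> V -> R)
     (d : measure_display) (Omega : measurableType d) (Pr : probability Omega R)
     (init : V -> Omega -> site) (C : V -> Omega -> R) (W : V -> nat -> Omega -> V),
     graph_rel E -> connected_graph E -> transition_on E P ->
     irreducible P -> recurrent P ->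
     golf_process Pr init C W P ->
     {ae Pr, forall w, B0 init w #<= H0 init w} ->
     valid Pr init C W)
  /\
  (forall (V : countType) (E : rel V) (P : V -> V -> R)
     (d : measure_display) (Omega : measurableType d) (Pr : probability Omega R)
     (init : V -> Omega -> site) (C : V -> Omega -> R) (W : V -> nat -> Omega -> V),
     ~ finite_set [set: V] ->
     graph_rel E -> connected_graph E -> transition_on E P ->
     irreducible P -> recurrent P ->
     golf_process Pr init C W P ->
     {ae Pr, forall w, finite_set (B0 init w) /\ B0 init w #<= H0 init w} ->
     valid Pr init C W).
Proof.
split=> [V E P d Omega Pr init C W _ _ [P_ge0 _] irr rec process fit
        |V E P d Omega Pr init C W _ _ _ [P_ge0 _] irr rec process fit].
  apply: golf_process_valid P_ge0 irr rec process _.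
  by apply: filterS fit => w; split => //; exact: finite_finset.
exact: golf_process_valid P_ge0 irr rec process fit.
Qed.
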